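(* Let $U\in\mathcal U_n$ with order $\prec$, let $w=q(U)$ and let $f=f_U$ be the associated permutation. Define $\prec_f$ on $\{1,\dots,n\}$ by $i\prec_f j$ iff $f^{-1}(i)\prec_{P(w)}f^{-1}(j)$. Then $\prec_f$ coincides with $\prec$.
   Context: A unit interval order on $\{1,\dots,n\}$ is a relation $\prec$ such that there are closed intervals $I_1,\dots,I_n$ of length $1$ in $\mathbb R$, numbered from left to right, with $i\prec j$ iff $I_i$ lies strictly to the left of $I_j$; $\mathcal U_n$ is the set of these. For a sequence $w=(w_1,\dots,w_n)$ of nonnegative integers, $P(w)$ is the poset on $\{1,\dots,n\}$ with order $\prec_{P(w)}$: $i\prec_{P(w)} j$ iff $w_j-w_i\ge2$, or $w_j-w_i=1$ and $i<j$. Levels: $\ell(1)=0$ and $\ell(j)=\max_{i\prec j}\ell(i)+1$ for $j\ge2$, with $\ell(j)=0$ if no $i\prec j$. Algorithm: $q_1=(0)$; given $q_{i-1}$, let $C_i$ be the number of $k\prec i$ with $\ell(k)=\ell(i)-1$, and obtain $q_i$ by inserting a letter $\ell(i)$ into $q_{i-1}$ directly after the (possibly empty) run of letters $\ell(i)$ immediately following the $C_i$-th occurrence of the letter $\ell(i)-1$ (the 0-th occurrence meaning the start of the word); $q(U)=q_n$. The permutation $f_U$ of $\{1,\dots,n\}$: with $w=q(U)$, number the positions $i$ with $w_i=0$ from left to right starting at $1$, then continue numbering the positions with $w_i=1$ from left to right, then those with $w_i=2$, and so on; $f_U(i)$ is the number assigned to position $i$. *)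

From Stdlib Require Import Reals.
From mathcomp Require Import all_boot.
Set Implicit Arguments. Unset Strict Implicit. Unset Printing Implicit Defensive.

(* Elements are 1..n (nat); relations are boolean relations on nat,
   only their values on {1..n} matter. *)

(* prec is a unit interval order on {1,...,n}: there are unit intervals
   I_i = [a i, a i + 1], numbered from left to right (a nondecreasing),
   with i prec j iff I_i lies strictly to the left of I_j. *)
Definition is_unit_interval_order (n : nat) (prec : rel nat) : Prop :=
  exists a : nat -> R,
    (forall i j, 1 <= i -> i <= j -> j <= n -> Rle (a i) (a j)) /\
    (forall i j, 1 <= i <= n -> 1 <= j <= n ->
       (prec i j <-> Rlt (Rplus (a i) R1) (a j))).

(* levels: levs prec k = [:: l(1); ...; l(k)].  Since i prec j forces i < j
   in a unit interval order, the max over predecessors ranges over i < j. *)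
Fixpoint levs (prec : rel nat) (k : nat) : seq nat :=
  match k with
  | 0 => [::]
  | k'.+1 =>
      let L := levs prec k' in
      rcons L (\max_(i <- iota 1 k' | prec i k'.+1) (nth 0 L i.-1).+1)
  end.

Definition level (n : nat) (prec : rel nat) (j : nat) : nat :=
  nth 0 (levs prec n) j.-1.

(* occ_end a c q = length of the shortest prefix of q containing c
   occurrences of a (0 when c = 0: the start of the word). *)
Fixpoint occ_end (a c : nat) (q : seq nat) : nat :=
  if c == 0 then 0 else
  match q with
  | [::] => 0
  | x :: q' => (occ_end a (c - (x == a)) q').+1
  end.

(* insert letter l directly after the (possibly empty) run of letters l
   immediately following the c-th occurrence of letter l-1 *)
Definition insert_step (q : seq nat) (l c : nat) : seq nat :=
  let p0 := occ_end l.-1 c q in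
  let p := p0 + find (predC1 l) (drop p0 q) in
  take p q ++ l :: drop p q.

Definition Ccount (n : nat) (prec : rel nat) (i : nat) : nat :=
  count (fun k => prec k i && (level n prec k == (level n prec i).-1)) (iota 1 n).

(* q_i for i = 0..n, with q_0 = [::] (so that q_1 = [:: 0]). *)
Definition qword_upto (n : nat) (prec : rel nat) (m : nat) : seq nat :=
  foldl (fun q i => insert_step q (level n prec i) (Ccount n prec i)) [::] (iota 1 m).

Definition qword (n : nat) (prec : rel nat) : seq nat := qword_upto n prec n.

(* w_i, 1-based *)
Definition wat (w : seq nat) (i : nat) : nat := nth 0 w i.-1.

Definition Pw (w : seq nat) : rel nat :=
  fun i j => (wat w i + 2 <= wat w j) || ((wat w j == (wat w i).+1) && (i < j)).

(* f_U(i): positions with letter 0 are numbered first from left to right,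
   then those with letter 1, etc.  So f(i) = #{k | w_k < w_i} +
   #{k <= i | w_k = w_i}. *)
Definition fperm (w : seq nat) (i : nat) : nat :=
  count (fun x => x < wat w i) w + count (pred1 (wat w i)) (take i w).

Definition fU (n : nat) (prec : rel nat) : nat -> nat := fperm (qword n prec).

Definition finvU (n : nat) (f : nat -> nat) (i : nat) : nat :=
  (find (fun a => f a == i) (iota 1 n)).+1.

(* The levels already decide the order except between consecutive levels:
   a predecessor i of j has l(i) < l(j), and a non-predecessor has
   l(j) <= l(i) + 1.  To see that q(U) records the remaining information, run
   the insertion algorithm on words whose letters are the elements themselves,
   each element standing where its level letter was inserted.  Along the
   insertion one maintains: the elements of one level appear in increasing
   order; if l(y) = l(x) + 1 then x stands left of y iff x ≺ y; and everything
   strictly between an element and its largest predecessor has at least its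
   level.  The first invariant and the monotonicity of l show that f_U sends
   the position of e to e, so f_U^-1(e) is the position of e; the second one
   then settles the case l(j) = l(i) + 1. *)
From Stdlib Require Import Lra.
From mathcomp Require Import all_boot.
Set Implicit Arguments. Unset Strict Implicit. Unset Printing Implicit Defensive.

Lemma ltn_bump2 h i j : (bump h i < bump h j) = (i < j).
Proof. by rewrite !ltnNge leq_bump2. Qed.

Lemma bump_ltn h i : (bump h i < h) = (i < h).
Proof. by rewrite /bump; case: (leqP h i) => [hi | //]; rewrite add1n ltnNge ltnW. Qed.

Section SeqInsert.
Variables (T : eqType) (s : seq T) (p : nat) (x : T).
Hypothesis x_notin_s : x \notin s.

Lemma index_insert_new : p <= size s -> index x (take p s ++ x :: drop p s) = p.
Proof.
move=> ps; rewrite index_cat (negbTE (contra (@mem_take _ _ _ _) x_notin_s)).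
by rewrite /= eqxx addn0 size_takel.
Qed.

Lemma index_insert y : y \in s ->
  index y (take p s ++ x :: drop p s) = bump p (index y s).
Proof.
move=> ys; have yx : y != x by apply: contraNneq x_notin_s => <-.
rewrite /bump index_cat in_take //; case: leqP => [pi | ip]; last first.
  by rewrite -{2}(cat_take_drop p s) index_cat in_take // ip.
have ps : p <= size s by rewrite (leq_trans pi) ?index_size.
rewrite /= eq_sym (negbTE yx) size_takel // -{2}(cat_take_drop p s) index_cat.
by rewrite in_take // ltnNge pi /= size_takel // addnS.
Qed.

End SeqInsert.

Lemma occ_end_count a w t : t < size w -> nth 0 w t = a ->
  occ_end a (count (pred1 a) (take t w)).+1 w = t.+1.
Proof.
elim: w t => [|y w IH] [|t] //=.
- by move=> _ ->; rewrite eqxx subnn; case: w {IH}.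
- by rewrite ltnS => tw wt; rewrite -addnS addKn IH.
Qed.

Lemma finvU_map n f s e : map f (iota 1 n) = s -> finvU n f e = (index e s).+1.
Proof. by move=> <-; rewrite /finvU /index find_map. Qed.

Lemma mem_iota1 m y : (y \in iota 1 m) = (1 <= y <= m).
Proof. by rewrite mem_iota add1n ltnS. Qed.

Lemma count_leq_iota1 e n : e <= n -> count (leq^~ e) (iota 1 n) = e.
Proof.
move=> en; rewrite -(subnKC en) iotaD count_cat add1n.
rewrite (@eq_in_count _ _ predT) => [|y]; last by rewrite mem_iota1 => /andP [].
rewrite count_predT size_iota (@eq_in_count _ _ pred0) ?count_pred0 ?addn0 // => y.
by rewrite mem_iota => /andP [ey _]; rewrite /= leqNgt ey.
Qed.

Definition ins_pos (q : seq nat) (l c : nat) : nat :=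
  occ_end l.-1 c q + find (predC1 l) (drop (occ_end l.-1 c q) q).

Lemma occ_end_size a c q : occ_end a c q <= size q.
Proof. by elim: q c => [|x q IH] [|c] //=; rewrite ltnS IH. Qed.

Lemma ins_pos_size q l c : ins_pos q l c <= size q.
Proof.
rewrite /ins_pos; set p0 := occ_end _ _ _.
by rewrite -(subnKC (occ_end_size l.-1 c q)) leq_add2l -size_drop find_size.
Qed.

Lemma nth_before_ins_pos q l c k :
  occ_end l.-1 c q <= k < ins_pos q l c -> nth 0 q k = l.
Proof.
rewrite /ins_pos; set p0 := occ_end _ _ _ => /andP [p0k].
rewrite -(subnKC p0k) ltn_add2l => /(before_find 0).
by rewrite nth_drop => /negbFE /eqP.
Qed.

Lemma nth_ins_pos q l c : ins_pos q l c < size q -> nth 0 q (ins_pos q l c) != l.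
Proof.
rewrite /ins_pos; set p0 := occ_end _ _ _ => p_lt.
have: has (predC1 l) (drop p0 q).
  by rewrite has_find size_drop ltn_subRL.
by move/(nth_find 0); rewrite nth_drop.
Qed.

Lemma ins_pos_const q l : all (pred1 l) q -> ins_pos q l 0 = size q.
Proof.
move=> q_l; rewrite /ins_pos; have -> : occ_end l.-1 0 q = 0 by case: q {q_l}.
by rewrite drop0 add0n; apply/hasNfind/hasPn => x /(allP q_l) /= ->.
Qed.

Lemma occ_end_leq_ins_pos q l c : occ_end l.-1 c q <= ins_pos q l c.
Proof. exact: leq_addr. Qed.

Section UnitIntervalOrder.
Variables (n : nat) (prec : rel nat).
Hypothesis prec_ltn : forall i j, 1 <= i <= n -> 1 <= j <= n -> prec i j -> i < j.
Hypothesis precWl : forall i i' j,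
  1 <= i' -> i' <= i -> i <= n -> 1 <= j <= n -> prec i j -> prec i' j.
Hypothesis precWr : forall i j j',
  1 <= i <= n -> 1 <= j -> j <= j' -> j' <= n -> prec i j -> prec i j'.

Local Notation lv := (level n prec).

Lemma size_levs k : size (levs prec k) = k.
Proof. by elim: k => //= k IH; rewrite size_rcons IH. Qed.

Lemma nth_levs k m i : k <= m -> i < k -> nth 0 (levs prec m) i = nth 0 (levs prec k) i.
Proof.
elim: m => [|m IH]; first by rewrite leqn0 => /eqP ->.
rewrite leq_eqVlt => /orP [/eqP -> //|]; rewrite ltnS => km ik.
by rewrite /= nth_rcons size_levs (leq_trans ik km) IH.
Qed.

Lemma levelE j : 1 <= j <= n -> lv j = \max_(i <- iota 1 j.-1 | prec i j) (lv i).+1.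
Proof.
case: j => // j /andP [_ jn].
rewrite /level /= (nth_levs jn (ltnSn j)) /= nth_rcons size_levs ltnn eqxx.
rewrite big_seq_cond [RHS]big_seq_cond; apply: eq_bigr => i /andP [+ _].
rewrite mem_iota add1n => /andP [i1 ij].
by rewrite (@nth_levs j n) ?(ltnW jn) // -ltnS prednK.
Qed.

Lemma level_gt i j : 1 <= i <= n -> 1 <= j <= n -> prec i j -> lv i < lv j.
Proof.
move=> i1n j1n ij; have /andP [i1 _] := i1n; have /andP [j1 _] := j1n.
rewrite (levelE j1n); apply: (leq_bigmax_seq i _ ij).
by rewrite mem_iota add1n prednK // i1 (prec_ltn i1n j1n ij).
Qed.

Lemma level_leP j b : 1 <= j <= n ->
  (forall i, 1 <= i < j -> prec i j -> lv i < b) -> lv j <= b.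
Proof.
move=> /[dup] j1n /andP [j1 _] bound; rewrite (levelE j1n).
by apply/bigmax_leqP_seq => i; rewrite mem_iota add1n prednK //; apply: bound.
Qed.

Lemma leq_level i j : 1 <= i -> i <= j -> j <= n -> lv i <= lv j.
Proof.
move=> i1 ij jn; have i1n : 1 <= i <= n by rewrite i1 (leq_trans ij).
apply: level_leP => // k /andP [k1 ki] ki_prec.
have k1n : 1 <= k <= n by rewrite k1 (leq_trans (ltnW ki)) ?(leq_trans ij).
by apply: level_gt => //; [rewrite (leq_trans i1) | apply: precWr ki_prec].
Qed.

Lemma level_le_succ i j : 1 <= i <= n -> 1 <= j <= n -> ~~ prec i j -> lv j <= (lv i).+1.
Proof.
move=> /andP [i1 le_in] j1n not_ij; apply: level_leP => // k /andP [k1 kj] kj_prec.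
rewrite ltnS leq_level //; apply: contraNT not_ij; rewrite -ltnNge => ik.
have kn : k <= n by rewrite (leq_trans (ltnW kj)) //; case/andP: j1n.
exact: (precWl i1 (ltnW ik) kn j1n kj_prec).
Qed.

Definition is_max_pred x j :=
  [/\ 1 <= x <= n, prec x j & forall k, 1 <= k <= n -> prec k j -> k <= x].

Lemma level_max_pred x j : 1 <= j <= n -> is_max_pred x j -> lv j = (lv x).+1.
Proof.
move=> j1n [x1n xj x_max]; apply/eqP; rewrite eqn_leq level_gt // andbT.
apply: level_leP => // k /andP [k1 kj] kj_prec; rewrite ltnS leq_level //.
- by apply: x_max kj_prec; rewrite k1 (leq_trans (ltnW kj)) //; case/andP: j1n.
- by case/andP: x1n.
Qed.

Lemma exists_max_pred j : 1 <= j <= n -> 0 < lv j -> exists x, is_max_pred x j.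
Proof.
move=> j1n lj_gt0.
have has_pred : exists k, (1 <= k <= n) && prec k j.
  case: (boolP (has (prec^~ j) (iota 1 n))) => [/hasP [k] | /hasPn no_pred].
    by rewrite mem_iota1 => k1n kj; exists k; rewrite k1n.
  suff: lv j <= 0 by rewrite leqNgt lj_gt0.
  apply: level_leP => // k /andP [k1 kj] kj_prec.
  have kn : k <= n by rewrite (leq_trans (ltnW kj)) //; case/andP: j1n.
  by move: (no_pred k); rewrite mem_iota1 k1 kn kj_prec => /(_ isT).
have pred_le_n k : (1 <= k <= n) && prec k j -> k <= n by case/andP=> /andP [].
case: (ex_maxnP has_pred pred_le_n) => x /andP [x1n xj] x_max.
by exists x; split=> // k k1n kj; apply: x_max; rewrite k1n.
Qed.

Lemma max_predP x j k : 1 <= j <= n -> is_max_pred x j -> 1 <= k <= n ->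
  prec k j = (k <= x).
Proof.
move=> j1n [/andP [x1 xn] xj x_max] /andP [k1 kn].
apply/idP/idP => [|kx]; first by apply: x_max; rewrite k1.
exact: (precWl k1 kx xn j1n xj).
Qed.

Definition lstep (L : seq nat) (j : nat) : seq nat :=
  let p := ins_pos (map lv L) (lv j) (Ccount n prec j) in take p L ++ j :: drop p L.

Definition lword (m : nat) : seq nat := foldl lstep [::] (iota 1 m).

Lemma map_level_lword m : map lv (lword m) = qword_upto n prec m.
Proof.
elim: m => // m IH; rewrite /lword /qword_upto -[m.+1]addn1 iotaD !foldl_cat -/(lword m) /=.
by rewrite /lstep map_cat map_take /= map_drop IH.
Qed.

Definition sorted_within_levels (L : seq nat) :=
  {in L &, forall x y, lv x = lv y -> x < y -> index x L < index y L}.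

Definition prec_by_position (L : seq nat) :=
  {in L &, forall x y, lv y = (lv x).+1 -> (index x L < index y L) = prec x y}.

(* Ensures that the run of letters [lv j] skipped when inserting [j] reaches
   every element of that level standing right of the largest predecessor of [j]. *)
Definition high_after_max_pred (L : seq nat) := forall x y z,
  x \in L -> y \in L -> z \in L -> is_max_pred x y ->
  index x L < index z L < index y L -> lv y <= lv z.

Definition word_inv (m : nat) (L : seq nat) := [/\ perm_eq L (iota 1 m),
  sorted_within_levels L, prec_by_position L & high_after_max_pred L].

Lemma index_leq_within_level L x y : uniq L -> sorted_within_levels L ->
  x \in L -> y \in L -> lv x = lv y -> (index x L <= index y L) = (x <= y).
Proof.
move=> L_uniq L_sorted xL yL lxy; case: (ltngtP x y) => [xy | yx | ->]; last by rewrite !leqnn.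
- by rewrite ltnW // L_sorted.
- by apply/negbTE; rewrite -ltnNge L_sorted.
Qed.

Lemma count_level_prefix m L e : m <= n -> perm_eq L (iota 1 m) ->
  sorted_within_levels L -> e \in L ->
  count (fun y => lv y == lv e) (take (index e L).+1 L) =
  count (fun y => (y <= e) && (lv y == lv e)) (iota 1 n).
Proof.
move=> mn L_perm L_sorted eL; have L_uniq : uniq L by rewrite (perm_uniq L_perm) iota_uniq.
rewrite -!size_filter; apply/perm_size/uniq_perm; rewrite ?filter_uniq ?take_uniq ?iota_uniq //.
move=> y; rewrite !mem_filter mem_iota1.
have /andP [_ em] : 1 <= e <= m by rewrite -mem_iota1 -(perm_mem L_perm).
case: (eqVneq (lv y) (lv e)) => [lye | _]; last by rewrite !andbF.
case yL : (y \in L).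
- have /andP [y1 ym] : 1 <= y <= m by rewrite -mem_iota1 -(perm_mem L_perm).
  rewrite in_take // ltnS (index_leq_within_level L_uniq) //.
  by rewrite y1 (leq_trans ym mn) !andbT.
- have -> : (y \in take (index e L).+1 L) = false by apply: contraFF yL => /mem_take.
  rewrite andbT; symmetry; apply: contraFF yL => /and3P [ye y1 _].
  by rewrite (perm_mem L_perm) mem_iota1 y1 (leq_trans ye em).
Qed.

Section InsertionStep.
Variables (m : nat) (L : seq nat).
Hypothesis m_lt_n : m < n.
Hypothesis L_inv : word_inv m L.

Local Notation j := m.+1.
Local Notation p := (ins_pos (map lv L) (lv j) (Ccount n prec j)).
Local Notation Lj := (lstep L j).

Let L_perm : perm_eq L (iota 1 m). Proof. by case: L_inv. Qed.
Let L_sorted : sorted_within_levels L. Proof. by case: L_inv. Qed.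
Let L_prec : prec_by_position L. Proof. by case: L_inv. Qed.
Let L_high : high_after_max_pred L. Proof. by case: L_inv. Qed.
Let L_uniq : uniq L. Proof. by rewrite (perm_uniq L_perm) iota_uniq. Qed.
Let mem_L y : (y \in L) = (1 <= y <= m). Proof. by rewrite (perm_mem L_perm) mem_iota1. Qed.
Let j_range : 1 <= j <= n. Proof. by []. Qed.
Let j_notin_L : j \notin L. Proof. by rewrite mem_L ltnn andbF. Qed.

Let L_range y : y \in L -> 1 <= y <= n.
Proof. by rewrite mem_L => /andP [-> ym]; rewrite (leq_trans ym (ltnW m_lt_n)). Qed.

Let L_ltj y : y \in L -> y < j.
Proof. by rewrite mem_L ltnS => /andP []. Qed.

Let level_L y : y \in L -> lv y <= lv j.
Proof. by move=> yL; have /andP [y1 _] := L_range yL; rewrite leq_level // ltnW // L_ltj. Qed.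

Let nth_levels y : y \in L -> nth 0 (map lv L) (index y L) = lv y.
Proof. by move=> yL; rewrite (nth_map 0) ?index_mem // nth_index. Qed.

Let max_pred_in_L x : is_max_pred x j -> x \in L.
Proof.
case=> x1n xj _; have /andP [x1 _] := x1n.
by rewrite mem_L x1 -ltnS (prec_ltn x1n j_range xj).
Qed.

Lemma ins_pos_level0 : lv j = 0 -> p = size L.
Proof.
move=> lj0; have -> : Ccount n prec j = 0.
  apply/eqP; rewrite -leqn0 leqNgt -has_count; apply/hasPn => k; rewrite mem_iota1 => k1n.
  by apply/negP => /andP [kj _]; have := level_gt k1n j_range kj; rewrite lj0.
rewrite lj0 ins_pos_const ?size_map //; apply/allP => _ /mapP [y yL ->] /=.
by rewrite -leqn0 -lj0 level_L.
Qed.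

Lemma occ_end_max_pred x : is_max_pred x j ->
  occ_end (lv j).-1 (Ccount n prec j) (map lv L) = (index x L).+1.
Proof.
move=> xm; have xL := max_pred_in_L xm; have ixL : index x L < size L by rewrite index_mem.
have -> : Ccount n prec j = (count (pred1 (lv x)) (take (index x L) (map lv L))).+1.
  rewrite /Ccount (level_max_pred j_range xm) /=.
  rewrite (@eq_in_count _ _ (fun k => (k <= x) && (lv k == lv x))); last first.
    by move=> k; rewrite mem_iota1 => k1n; rewrite (max_predP j_range xm k1n).
  rewrite -(count_level_prefix (ltnW m_lt_n) L_perm L_sorted xL) (take_nth 0 ixL).
  by rewrite nth_index // -cats1 count_cat /= eqxx addn1 -map_take count_map.
by rewrite (level_max_pred j_range xm) occ_end_count ?size_map ?nth_levels.
Qed.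

Lemma index_max_pred_lt_ins_pos x : is_max_pred x j -> index x L < p.
Proof. by move=> xm; rewrite -(occ_end_max_pred xm) occ_end_leq_ins_pos. Qed.

Lemma level_before_ins_pos x z : is_max_pred x j -> z \in L ->
  index x L < index z L < p -> lv z = lv j.
Proof.
move=> xm zL /andP [xz zp]; rewrite -nth_levels //.
by apply: (@nth_before_ins_pos _ _ (Ccount n prec j)); rewrite (occ_end_max_pred xm) xz.
Qed.

Lemma level_at_ins_pos : p < size L -> lv (nth 0 L p) != lv j.
Proof. by move=> p_lt; rewrite -(nth_map 0 0) // nth_ins_pos ?size_map. Qed.

Lemma index_lt_ins_pos y : y \in L -> lv y = lv j -> index y L < p.
Proof.
move=> yL lyj; case: (posnP (lv j)) => [lj0 | lj_gt0].
  by rewrite ins_pos_level0 // index_mem.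
have [x xm] := exists_max_pred j_range lj_gt0; have xL := max_pred_in_L xm.
have x_p := index_max_pred_lt_ins_pos xm.
have [x1n xj x_max] := xm; have lxj := level_max_pred j_range xm.
have [xy | not_xy] := boolP (prec x y); last first.
  by rewrite (leq_ltn_trans _ x_p) // leqNgt L_prec // lyj lxj.
have xy_max : is_max_pred x y.
  split=> // k k1n ky; apply: (x_max _ k1n).
  by have /andP [y1 _] := L_range yL; apply: (precWr k1n y1 (ltnW (L_ltj yL)) m_lt_n ky).
rewrite ltnNge; apply/negP => p_y.
have p_lt : p < size L by rewrite (leq_ltn_trans p_y) ?index_mem.
have zL : nth 0 L p \in L by rewrite mem_nth.
have iz : index (nth 0 L p) L = p by rewrite index_uniq.
move/eqP: (level_at_ins_pos p_lt); apply.
move: p_y; rewrite leq_eqVlt => /predU1P [-> | p_lt_y]; first by rewrite nth_index.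
by apply/eqP; rewrite eqn_leq level_L // -{1}lyj (L_high xL yL zL) // iz x_p.
Qed.

Lemma ins_pos_prec i : i \in L -> lv j = (lv i).+1 -> (index i L < p) = prec i j.
Proof.
move=> iL lji; have [|x xm] := exists_max_pred j_range; first by rewrite lji.
have xL := max_pred_in_L xm; have lxi : lv x = lv i.
  by apply/eqP; rewrite -eqSS -(level_max_pred j_range xm) lji.
rewrite (max_predP j_range xm (L_range iL)); case: (leqP i x) => [ix | xi].
  by rewrite (leq_ltn_trans _ (index_max_pred_lt_ins_pos xm)) // index_leq_within_level.
apply/negP => ip; have := level_before_ins_pos xm iL; rewrite L_sorted // ip => /(_ isT).
by move/eqP; rewrite lji -[X in X == _]addn0 -addn1 eqn_add2l.
Qed.

Let mem_lstep y : (y \in Lj) = (y == j) || (y \in L).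
Proof. by rewrite /lstep mem_cat in_cons orbCA -mem_cat cat_take_drop. Qed.

Let index_lstep y : y \in L -> index y Lj = bump p (index y L).
Proof. exact: (@index_insert _ _ p _ j_notin_L). Qed.

Let index_lstep_new : index j Lj = p.
Proof. by rewrite (index_insert_new j_notin_L) // -(size_map lv) ins_pos_size. Qed.

Lemma perm_lstep : perm_eq Lj (iota 1 j).
Proof.
apply: (@perm_trans _ (j :: L)); first by rewrite /lstep -cat1s perm_catCA cat_take_drop.
have -> : iota 1 j = iota 1 m ++ [:: j] by rewrite -[m.+1]addn1 iotaD add1n addn1.
by rewrite perm_sym perm_catC /= perm_cons perm_sym.
Qed.

Lemma sorted_within_levels_lstep : sorted_within_levels Lj.
Proof.
move=> x y; rewrite !mem_lstep => /predU1P [-> | xL] /predU1P [-> | yL] lxy xy.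
- by rewrite ltnn in xy.
- by move: xy; rewrite ltnNge (ltnW (L_ltj yL)).
- by rewrite (index_lstep xL) index_lstep_new bump_ltn index_lt_ins_pos.
- by rewrite !index_lstep // ltn_bump2 L_sorted.
Qed.

Lemma prec_by_position_lstep : prec_by_position Lj.
Proof.
move=> x y; rewrite !mem_lstep => /predU1P [-> | xL] /predU1P [-> | yL] lxy.
- by move: (ltnSn (lv j)); rewrite -{2}lxy ltnn.
- by move: (level_L yL); rewrite lxy ltnn.
- by rewrite (index_lstep xL) index_lstep_new bump_ltn ins_pos_prec.
- by rewrite !index_lstep // ltn_bump2 L_prec.
Qed.

Lemma high_after_max_pred_lstep : high_after_max_pred Lj.
Proof.
move=> x y z; rewrite !mem_lstep.
move=> /predU1P [-> | xL] /predU1P [-> | yL] /predU1P [-> | zL] /[dup] xy_max [_ xy _].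
- by have := prec_ltn j_range j_range xy; rewrite ltnn.
- by have := prec_ltn j_range j_range xy; rewrite ltnn.
- by have := prec_ltn j_range (L_range yL) xy; rewrite ltnNge (ltnW (L_ltj yL)).
- by have := prec_ltn j_range (L_range yL) xy; rewrite ltnNge (ltnW (L_ltj yL)).
- by rewrite ltnn andbF.
- rewrite (index_lstep xL) (index_lstep zL) index_lstep_new ltn_bump2 bump_ltn => xzp.
  by rewrite (level_before_ins_pos xy_max zL xzp).
- by move=> _; apply: level_L.
- by rewrite !index_lstep // !ltn_bump2; apply: L_high.
Qed.

Lemma word_inv_lstep : word_inv j Lj.
Proof.
split; [exact: perm_lstep | exact: sorted_within_levels_lstep |
        exact: prec_by_position_lstep | exact: high_after_max_pred_lstep].
Qed.

End InsertionStep.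

Lemma word_inv_lword m : m <= n -> word_inv m (lword m).
Proof.
elim: m => [_ | m IH mn]; first by split=> // x y; rewrite in_nil.
rewrite /lword -[m.+1]addn1 iotaD foldl_cat -/(lword m) add1n addn1 /=.
exact: word_inv_lstep mn (IH (ltnW mn)).
Qed.

Lemma precE_level i j : 1 <= i <= n -> 1 <= j <= n ->
  prec i j = ((lv i).+1 < lv j) || (lv j == (lv i).+1) && prec i j.
Proof.
move=> i1n j1n; have [ij | not_ij] := boolP (prec i j).
  by move: (level_gt i1n j1n ij); rewrite leq_eqVlt => /predU1P [<- | ->]; rewrite ?eqxx ?orbT.
by rewrite andbF orbF; apply/esym/negbTE; rewrite -leqNgt level_le_succ.
Qed.

Lemma qword_lword : qword n prec = map lv (lword n).
Proof. by rewrite map_level_lword. Qed.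

Lemma wat_lword e : e \in lword n -> wat (qword n prec) (index e (lword n)).+1 = lv e.
Proof. by move=> eL; rewrite /wat qword_lword (nth_map 0) ?index_mem // nth_index. Qed.

Lemma fU_lword e : e \in lword n -> fU n prec (index e (lword n)).+1 = e.
Proof.
have [L_perm L_sorted _ _] := word_inv_lword (leqnn n).
move=> eL; have /andP [e1 en] : 1 <= e <= n by rewrite -mem_iota1 -(perm_mem L_perm).
rewrite /fU /fperm wat_lword // qword_lword -map_take !count_map (permP L_perm).
rewrite (count_level_prefix (leqnn n) L_perm L_sorted eL) -count_predUI.
rewrite (@eq_count _ (predI _ _) pred0) ?count_pred0 ?addn0 => [|y]; last first.
  by rewrite /=; case: ltngtP; rewrite ?andbF.
apply: etrans (count_leq_iota1 en); apply: eq_in_count => y.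
rewrite mem_iota1 => /andP [y1 yn] /=; case: (leqP y e) => [ye | ey].
  by rewrite orbC -leq_eqVlt leq_level.
by rewrite orbF; apply/negbTE; rewrite -leqNgt leq_level // ltnW.
Qed.

Lemma map_fU_lword : map (fU n prec) (iota 1 n) = lword n.
Proof.
have [L_perm _ _ _] := word_inv_lword (leqnn n).
have L_uniq : uniq (lword n) by rewrite (perm_uniq L_perm) iota_uniq.
have size_L : size (lword n) = n by rewrite (perm_size L_perm) size_iota.
apply: (@eq_from_nth _ 0); rewrite size_map size_iota ?size_L // => k kn.
rewrite (nth_map 0) ?size_iota // nth_iota // add1n.
have kL : k < size (lword n) by rewrite size_L.
by rewrite -{1}(index_uniq 0 kL L_uniq) fU_lword // mem_nth.
Qed.

Lemma prec_Pw i j : 1 <= i <= n -> 1 <= j <= n ->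
  prec i j = Pw (qword n prec) (finvU n (fU n prec) i) (finvU n (fU n prec) j).
Proof.
move=> i1n j1n; have [L_perm _ L_prec _] := word_inv_lword (leqnn n).
have iL : i \in lword n by rewrite (perm_mem L_perm) mem_iota1.
have jL : j \in lword n by rewrite (perm_mem L_perm) mem_iota1.
rewrite !(finvU_map _ map_fU_lword) /Pw !wat_lword // ltnS addn2 {1}precE_level //.
by congr orb; case: eqP => //= lji; rewrite L_prec.
Qed.

End UnitIntervalOrder.

Section UnitIntervalModel.
Variables (n : nat) (prec : rel nat).
Hypothesis prec_uio : is_unit_interval_order n prec.

Lemma uio_prec_ltn i j : 1 <= i <= n -> 1 <= j <= n -> prec i j -> i < j.
Proof.
have [a [a_mono a_prec]] := prec_uio.
move=> i1n j1n /(a_prec i j i1n j1n) aij; rewrite ltnNge; apply/negP => ji.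
have /andP [j1 _] := j1n; have /andP [_ i_le_n] := i1n.
have := a_mono j i j1 ji i_le_n; lra.
Qed.

Lemma uio_precWl i i' j :
  1 <= i' -> i' <= i -> i <= n -> 1 <= j <= n -> prec i j -> prec i' j.
Proof.
have [a [a_mono a_prec]] := prec_uio.
move=> i'1 i'i i_le_n j1n /(a_prec i j) aij.
have i1n : 1 <= i <= n by rewrite (leq_trans i'1 i'i).
apply/(a_prec i' j) => //; first by rewrite i'1 (leq_trans i'i).
have := a_mono i' i i'1 i'i i_le_n; have := aij i1n j1n; lra.
Qed.

Lemma uio_precWr i j j' :
  1 <= i <= n -> 1 <= j -> j <= j' -> j' <= n -> prec i j -> prec i j'.
Proof.
have [a [a_mono a_prec]] := prec_uio.
move=> i1n j1 jj' j'_le_n /(a_prec i j) aij.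
have j1n : 1 <= j <= n by rewrite j1 (leq_trans jj').
apply/(a_prec i j') => //; first by rewrite (leq_trans j1 jj').
have := a_mono j j' j1 jj' j'_le_n; have := aij i1n j1n; lra.
Qed.

End UnitIntervalModel.

Theorem mainTheorem5 (n : nat) (prec : rel nat) :
  is_unit_interval_order n prec ->
  forall i j : nat, (1 <= i <= n)%N -> (1 <= j <= n)%N ->
    prec i j =
    Pw (qword n prec) (finvU n (fU n prec) i) (finvU n (fU n prec) j).
Proof.
move=> uio; exact: prec_Pw (uio_prec_ltn uio) (uio_precWl uio) (uio_precWr uio).
Qed.
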